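(* Let $G$ be a group with identity $e$, $A$ a finite set with $|A|\ge2$, $S\subseteq G$ finite with $e\in S$ and $|S|\ge2$. Suppose $(\mathcal P,f)$ generates a local map $\mu:A^S\to A$. If $e$ is not essential for $\mu$, then $|\mathcal P|=|A|^{|S|}-|A|^{|S|-1}$.
   Context: $A^S$ is the set of functions $S\to A$. For $s\in S$, $\mathrm{Res}_s(z)=z|_{S\setminus\{s\}}$. An element $s\in S$ is essential for $\mu$ if there exist $z,w\in A^S$ with $\mathrm{Res}_s(z)=\mathrm{Res}_s(w)$ but $\mu(z)\neq\mu(w)$. The pair $(\mathcal P,f)$ generates $\mu$ if $\mathcal P=\{z\in A^S:\mu(z)\neq z(e)\}$ and $f:\mathcal P\to A$ is the restriction of $\mu$ to $\mathcal P$. *)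

From mathcomp Require Import all_boot.
From mathcomp Require Export finmap.
Set Implicit Arguments. Unset Strict Implicit. Unset Printing Implicit Defensive.
Local Open Scope fset_scope.

(* Configurations A^S are finite functions {ffun S -> A}, where S : {fset G}
   is coerced to the finite subtype of its elements. *)

Definition Res (G : choiceType) (S : {fset G}) (A : finType) (s : G)
  (z : {ffun S -> A}) : {ffun (S `\ s) -> A} :=
  [ffun t => z (fincl (fsubD1set S s) t)].

Definition essential (G : choiceType) (S : {fset G}) (A : finType)
  (mu : {ffun S -> A} -> A) (s : G) : Prop :=
  exists z w : {ffun S -> A}, Res s z = Res s w /\ mu z <> mu w.

Definition generates (G : choiceType) (S : {fset G}) (A : finType)
  (e : G) (he : e \in S) (P : {set {ffun S -> A}})
  (f : {z : {ffun S -> A} | z \in P} -> A) (mu : {ffun S -> A} -> A) : Prop :=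
  P = [set z | mu z != z [` he]] /\ (forall zP, f zP = mu (proj1_sig zP)).

From mathcomp Require Import all_boot finmap.

(* If [mu] ignores the coordinate [e], then [z] with [mu z = z e] is determined
   by its restriction to [S \ e]: the value at [e] is forced to be [mu] of any
   extension.  So exactly [|A|^(|S|-1)] configurations lie outside [P]. *)

Set Implicit Arguments.
Unset Strict Implicit.
Unset Printing Implicit Defensive.

Local Open Scope fset_scope.

Section Extension.

Variables (G : choiceType) (S : {fset G}) (A : finType) (s : G).
Hypothesis hs : s \in S.

Definition extend (r : {ffun (S `\ s) -> A}) (a : A) : {ffun S -> A} :=
  [ffun x => if insub (val x) : option (S `\ s) is Some y then r y else a].

Lemma Res_extend r a : Res s (extend r a) = r.
Proof.
apply/ffunP => t; rewrite !ffunE /=.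
by rewrite (insubT _ (valP t)) /=; congr (r _); apply: val_inj.
Qed.

Lemma extend_at r a : extend r a [` hs] = a.
Proof. by rewrite ffunE /=; case: insubP => // y; rewrite !inE eqxx. Qed.

Lemma extend_Res z : extend (Res s z) (z [` hs]) = z.
Proof.
apply/ffunP => x; rewrite ffunE; case: insubP => [y _ hy|].
  by rewrite ffunE; congr (z _); apply: val_inj; rewrite /= hy.
rewrite !inE (fsvalP x) andbT negbK => /eqP hx.
by congr (z _); apply: val_inj.
Qed.

Lemma nonessential_Res (mu : {ffun S -> A} -> A) :
  ~ essential mu s -> forall z w, Res s z = Res s w -> mu z = mu w.
Proof.
move=> hess z w hzw; apply/eqP; apply/negPn/negP => /eqP hne.
by apply: hess; exists z, w.
Qed.

Lemma card_eq_at_nonessential (mu : {ffun S -> A} -> A) (a0 : A) :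
  ~ essential mu s ->
  #|[set z | mu z == z [` hs]]| = #|A| ^ #|` S `\ s|.
Proof.
move=> /nonessential_Res mu_Res.
pose graph r := extend r (mu (extend r a0)).
have graph_inj : injective graph by move=> r1 r2 /(congr1 (Res s)); rewrite !Res_extend.
have -> : [set z | mu z == z [` hs]] = graph @: setT.
  apply/setP => z; rewrite inE; apply/eqP/imsetP => [hz | [r _ ->]].
    exists (Res s z) => //; rewrite -[z in LHS]extend_Res -hz.
    by congr extend; apply: mu_Res; rewrite Res_extend.
  by rewrite /graph extend_at; apply: mu_Res; rewrite !Res_extend.
by rewrite card_imset // cardsT card_ffun -cardfE.
Qed.

End Extension.

Theorem mainTheorem8
  (G : choiceType) (mul : G -> G -> G) (inv : G -> G) (e : G)
  (mulA : forall x y z, mul x (mul y z) = mul (mul x y) z)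
  (mul1g : forall x, mul e x = x) (mulg1 : forall x, mul x e = x)
  (mulVg : forall x, mul (inv x) x = e) (mulgV : forall x, mul x (inv x) = e)
  (A : finType) (hA : 2 <= #|A|)
  (S : {fset G}) (he : e \in S) (hS : 2 <= #|` S|)
  (mu : {ffun S -> A} -> A)
  (P : {set {ffun S -> A}}) (f : {z : {ffun S -> A} | z \in P} -> A)
  (hgen : generates he f mu)
  (hess : ~ essential mu e) :
  #|P| = #|A| ^ #|` S| - #|A| ^ (#|` S| - 1).
Proof.
have [a0 _] : exists a0 : A, a0 \in A by apply/card_gt0P; apply: ltnW.
have cardSe : (#|` S| - 1 = #|` S `\ e|)%N by rewrite (cardfsD1 e S) he add1n subn1.
have complP : ~: P = [set z | mu z == z [` he]].
  by case: hgen => hP _; rewrite hP; apply/setP => z; rewrite !inE negbK.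
have := cardsC P.
rewrite complP cardSe (card_eq_at_nonessential he a0 hess) card_ffun -cardfE.
by move=> <-; rewrite addnK.
Qed.
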